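(* Let $\Omega=\{\omega_1,\omega_2\}$ with $0<\omega_1<\omega_2$ and let $\mu^*$ be an aggregate market. Then every point in the interior of the surplus triangle of $\mu^*$ is rationalizable.
   Context: A monopolist with zero marginal cost sells one good to a unit mass of consumers with valuations in $\Omega$; a market is a probability vector over $\Omega$. Let $s(p,\omega)=p$ if $\omega\ge p$ and $0$ otherwise, $b(p,\omega)=\omega-p$ if $\omega\ge p$ and $0$ otherwise; in each market $\mu$ the monopolist charges $p^*(\mu)\in\arg\max_p\sum_i s(p,\omega_i)\mu_i$. A segmentation of $\mu^*$ is a finitely supported distribution $\tau$ over markets with $\sum_{\mu^s}\tau(\mu^s)\mu^s=\mu^*$. For a segmentation $\tau$, consumer surplus is $CS=\sum_{\mu^s}\tau(\mu^s)\sum_j b(p^*(\mu^s),\omega_j)\mu^s_j$ and producer surplus (excluding information cost) is $PS=\sum_{\mu^s}\tau(\mu^s)\sum_j s(p^*(\mu^s),\omega_j)\mu^s_j$. The surplus triangle of $\mu^*$ is the set of pairs $(CS,PS)$ with $CS\ge0$, $PS\ge\pi^*$ and $CS+PS\le w^*$, where $\pi^*=\max_p\sum_i s(p,\omega_i)\mu^*_i$ is the uniform monopoly profit and $w^*=\sum_i\omega_i\mu^*_i$ is the efficient total surplus. A posterior-separable, strictly convex cost function is one of the form $C(\tau)=\sum_{\mu^s}\tau(\mu^s)c(\mu^s)-c(\mu^* )$ with $c$ a strictly convex continuous function on markets (e.g. $c=-kH$ for Shannon entropy $H$). Given such $C$, a segmentation is optimal if it maximizes $\sum_{\mu^s}\tau(\mu^s)\sum_i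 s(p^*(\mu^s),\omega_i)\mu^s_i-C(\tau)$ over all segmentations of $\mu^*$. A pair $(CS,PS)$ is rationalizable if there exist a segmentation $\tau$ and a strictly convex posterior-separable cost function $C$ such that $\tau$ is optimal for the monopolist under $C$ and $\tau$ yields that $(CS,PS)$ pair. *)

From HB Require Import structures.
From mathcomp Require Import all_boot all_order all_algebra.
From mathcomp Require Import all_classical all_reals all_analysis.
Set Implicit Arguments. Unset Strict Implicit. Unset Printing Implicit Defensive.
Import Order.TTheory GRing.Theory Num.Theory.
Import numFieldNormedType.Exports.
Local Open Scope classical_set_scope.
Local Open Scope ring_scope.

Section Monopoly.
Variables (R : realType) (n : nat).

(* valuations omega_i = w ord0 i ; a market is a probability row vector *)
Definition market (m : 'rV[R]_n) : Prop :=
  (forall i, 0 <= m ord0 i) /\ \sum_(i < n) m ord0 i = 1.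

Definition seller (p om : R) : R := if p <= om then p else 0.
Definition buyer (p om : R) : R := if p <= om then om - p else 0.

Definition profit (w m : 'rV[R]_n) (p : R) : R :=
  \sum_(i < n) seller p (w ord0 i) * m ord0 i.
Definition csurplus (w m : 'rV[R]_n) (p : R) : R :=
  \sum_(i < n) buyer p (w ord0 i) * m ord0 i.

Definition opt_price (w m : 'rV[R]_n) (p : R) : Prop :=
  forall q : R, profit w m q <= profit w m p.

Definition unif_profit (w mu : 'rV[R]_n) : R := sup (range (profit w mu)).
Definition eff_surplus (w mu : 'rV[R]_n) : R :=
  \sum_(i < n) w ord0 i * mu ord0 i.

(* A segmentation: a finite list of (weight, segment market, price charged
   there). *)
Definition seg := seq (R * 'rV[R]_n * R).
Definition sw (x : R * 'rV[R]_n * R) : R := x.1.1.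
Definition sm (x : R * 'rV[R]_n * R) : 'rV[R]_n := x.1.2.
Definition sp (x : R * 'rV[R]_n * R) : R := x.2.

Definition is_segmentation (mu : 'rV[R]_n) (tau : seg) : Prop :=
  [/\ forall x, x \in tau -> 0 < sw x /\ market (sm x),
      uniq (map sm tau),
      \sum_(x <- tau) sw x = 1 &
      \sum_(x <- tau) sw x *: sm x = mu].

Definition priced (w : 'rV[R]_n) (tau : seg) : Prop :=
  forall x, x \in tau -> opt_price w (sm x) (sp x).

Definition PS (w : 'rV[R]_n) (tau : seg) : R :=
  \sum_(x <- tau) sw x * profit w (sm x) (sp x).
Definition CS (w : 'rV[R]_n) (tau : seg) : R :=
  \sum_(x <- tau) sw x * csurplus w (sm x) (sp x).

Definition cost (c : 'rV[R]_n -> R) (mu : 'rV[R]_n) (tau : seg) : R :=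
  \sum_(x <- tau) sw x * c (sm x) - c mu.

Definition strictly_convex_cont (c : 'rV[R]_n -> R) : Prop :=
  {within [set m | market m], continuous c} /\
  (forall a b (t : R), market a -> market b -> a != b -> 0 < t < 1 ->
     c (t *: a + (1 - t) *: b) < t * c a + (1 - t) * c b).

Definition optimal_seg (w : 'rV[R]_n) (c : 'rV[R]_n -> R)
    (mu : 'rV[R]_n) (tau : seg) : Prop :=
  forall tau', is_segmentation mu tau' -> priced w tau' ->
    PS w tau' - cost c mu tau' <= PS w tau - cost c mu tau.

Definition rationalizable (w mu : 'rV[R]_n) (cs ps : R) : Prop :=
  exists (tau : seg) (c : 'rV[R]_n -> R),
    [/\ strictly_convex_cont c, is_segmentation mu tau, priced w tau,
        optimal_seg w c mu tau & CS w tau = cs /\ PS w tau = ps].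

Definition in_interior_triangle (w mu : 'rV[R]_n) (cs ps : R) : Prop :=
  [/\ 0 < cs, unif_profit w mu < ps & cs + ps < eff_surplus w mu].

End Monopoly.

From HB Require Import structures.
From mathcomp Require Import all_boot all_order all_algebra.
From mathcomp Require Import all_classical all_reals all_analysis.
From mathcomp Require Import lra ring.
Set Implicit Arguments. Unset Strict Implicit. Unset Printing Implicit Defensive.
Import Order.TTheory GRing.Theory Num.Theory.
Import numFieldNormedType.Exports.
Local Open Scope ring_scope.

(* With valuations a < b a market is determined by its share z of high
   types, and the best profit in it is max(a, b z).  An interior point is
   reached by splitting the aggregate market into a segment with b q1 < a,
   where the price a serves everyone, and one with a < b q2, where the price
   b extracts all surplus.  This segmentation is optimal for the
   posterior-separable cost with density
   c(z) = max(a + k (z - q1)^2, b z + k (z - q2)^2), k > 0 small: c is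
   strictly convex, dominates the profit of every price in every market and
   equals the profit on both segments, so the net payoff of any segmentation,
   c(mu) - sum_s tau_s (c(mu_s) - profit_s), is at most c(mu), which this one
   attains. *)

Section Segmentations.
Variables (R : realType) (n : nat).
Implicit Types (w mu m : 'rV[R]_n) (tau : seg R n) (c : 'rV[R]_n -> R).

Lemma PS_sub_cost w c mu tau :
  PS w tau - cost c mu tau =
  \sum_(x <- tau) sw x * (profit w (sm x) (sp x) - c (sm x)) + c mu.
Proof.
rewrite /PS /cost (eq_bigr _ (fun x _ => mulrBr _ _ _)) sumrB.
by rewrite opprD opprK addrA.
Qed.

Lemma optimal_seg_tight_bound w c mu tau :
  (forall m, market m -> forall p, profit w m p <= c m) ->
  (forall x, x \in tau -> profit w (sm x) (sp x) = c (sm x)) ->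
  optimal_seg w c mu tau.
Proof.
move=> bound tight tau' [seg_pos _ _ _] _.
rewrite !PS_sub_cost lerD2r big_seq [X in _ <= X]big_seq.
rewrite [X in _ <= X]big1 => [|x /tight ->]; last by rewrite subrr mulr0.
apply: sumr_le0 => x /seg_pos [x_gt0 x_market].
by rewrite pmulr_rle0 // subr_le0 bound.
Qed.

Lemma two_point_segmentation mu (t : R) m1 m2 p1 p2 :
  0 < t < 1 -> market m1 -> market m2 -> m1 != m2 ->
  t *: m1 + (1 - t) *: m2 = mu ->
  is_segmentation mu [:: (t, m1, p1); (1 - t, m2, p2)].
Proof.
move=> /andP[t_gt0 t_lt1] m1_market m2_market m12 mean.
split; rewrite ?big_cons ?big_nil /sw /sm //=.
- by move=> x; rewrite !inE => /orP[] /eqP ->; rewrite /= ?subr_gt0.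
- by rewrite inE andbT.
- by rewrite addr0 addrC subrK.
- by rewrite addr0.
Qed.

End Segmentations.

Section StrictConvexity.
Variable R : realType.

Definition strictly_convex (f : R -> R) :=
  forall x y t, x != y -> 0 < t < 1 ->
    f (t * x + (1 - t) * y) < t * f x + (1 - t) * f y.

Lemma strictly_convex_max (f g : R -> R) :
  strictly_convex f -> strictly_convex g -> strictly_convex (f \max g).
Proof.
move=> f_conv g_conv x y t xy t01; have /andP[t_gt0 t_lt1] := t01.
have t_ge0 : 0 <= t by exact: ltW.
have t'_ge0 : 0 <= 1 - t by rewrite subr_ge0 ltW.
rewrite /= gt_max; apply/andP; split.
- apply: lt_le_trans (f_conv _ _ _ xy t01) _.
  by apply: lerD; apply: ler_wpM2l => //; rewrite le_max lexx.
- apply: lt_le_trans (g_conv _ _ _ xy t01) _.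
  by apply: lerD; apply: ler_wpM2l => //; rewrite le_max lexx orbT.
Qed.

Definition parabola (al be k r z : R) := al + be * z + k * (z - r) ^+ 2.

Lemma strictly_convex_parabola (al be k r : R) : 0 < k ->
  strictly_convex (parabola al be k r).
Proof.
move=> k_gt0 x y t xy /andP[t_gt0 t_lt1].
have gap : 0 < k * (t * (1 - t)) * (x - y) ^+ 2.
  have sq_gt0 : 0 < (x - y) ^+ 2 by rewrite exprn_even_gt0 //= subr_eq0.
  by rewrite mulr_gt0 // mulr_gt0 // mulr_gt0 // subr_gt0.
rewrite /parabola.
suff -> : t * (al + be * x + k * (x - r) ^+ 2) +
          (1 - t) * (al + be * y + k * (y - r) ^+ 2) =
          al + be * (t * x + (1 - t) * y) + k * (t * x + (1 - t) * y - r) ^+ 2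
          + k * (t * (1 - t)) * (x - y) ^+ 2 by rewrite ltrDl.
by ring.
Qed.

Lemma continuous_parabola (al be k r : R) : continuous (parabola al be k r).
Proof.
move=> z; rewrite /parabola; apply: cvgD.
  by apply: cvgD; [|apply: cvgM]; exact: cvg_cst || exact: cvg_id.
apply: cvgM; first exact: cvg_cst.
by rewrite expr2; apply: cvgM; apply: cvgB; exact: cvg_id || exact: cvg_cst.
Qed.

End StrictConvexity.

Section TwoTypes.
Variable R : realType.
Implicit Types (m mu : 'rV[R]_2) (k p q t z : R).

Definition share m : R := m ord0 ord_max.

Definition binary_market q : 'rV[R]_2 :=
  \row_j (if j == ord0 then 1 - q else q).

Lemma sum_ord2 (F : 'I_2 -> R) : \sum_(i < 2) F i = F ord0 + F ord_max.
Proof. by rewrite big_ord_recr big_ord1; congr (F _ + _); apply/val_inj. Qed.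

Lemma ord2_cases (j : 'I_2) : j = ord0 \/ j = ord_max.
Proof. by case: j => [[|[|//]] j_lt2]; [left | right]; apply/val_inj. Qed.

Lemma market_low_share m : market m -> m ord0 ord0 = 1 - share m.
Proof. by case=> _; rewrite sum_ord2 => <-; rewrite addrK. Qed.

Lemma market_share_bounds m : market m -> 0 <= share m <= 1.
Proof.
move=> m_market; have [m_ge0 _] := m_market.
by rewrite m_ge0 -subr_ge0 -(market_low_share m_market) m_ge0.
Qed.

Lemma share_binary q : share (binary_market q) = q.
Proof. by rewrite /share mxE. Qed.

Lemma market_binary q : 0 <= q -> q <= 1 -> market (binary_market q).
Proof.
move=> q_ge0 q_le1; split; last by rewrite sum_ord2 !mxE /= subrK.
by move=> j; rewrite mxE; case: ifP; rewrite ?subr_ge0.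
Qed.

Lemma marketE m : market m -> m = binary_market (share m).
Proof.
move=> m_market; apply/rowP => j; rewrite mxE (_ : 0 = ord0) //.
by case: (ord2_cases j) => ->; rewrite ?market_low_share.
Qed.

Lemma shareD t1 t2 m1 m2 :
  share (t1 *: m1 + t2 *: m2) = t1 * share m1 + t2 * share m2.
Proof. by rewrite /share !mxE. Qed.

Lemma binary_market_mean t q1 q2 :
  t *: binary_market q1 + (1 - t) *: binary_market q2 =
  binary_market (t * q1 + (1 - t) * q2).
Proof. by apply/rowP => j; rewrite !mxE; case: ifP => _ //; ring. Qed.

Lemma strictly_convex_cont_share (f : R -> R) :
  continuous f -> strictly_convex f -> strictly_convex_cont (fun m => f (share m)).
Proof.
move=> f_cont f_conv; split.
  apply: continuous_subspaceT => m; rewrite /share.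
  exact: continuous_comp (@coord_continuous R 1 2 ord0 ord_max m) (f_cont _).
move=> m1 m2 t m1_market m2_market m12 t01; rewrite shareD.
apply: f_conv t01; apply: contra m12 => /eqP share12.
by rewrite (marketE m1_market) (marketE m2_market) share12.
Qed.

Variable w : 'rV[R]_2.
Local Notation a := (w ord0 ord0).
Local Notation b := (w ord0 ord_max).
Hypotheses (a_gt0 : 0 < a) (a_lt_b : a < b).

Lemma profit_binary m p : market m ->
  profit w m p = seller p a * (1 - share m) + seller p b * share m.
Proof. by move=> m_market; rewrite /profit sum_ord2 (market_low_share m_market). Qed.

Lemma profit_low m : market m -> profit w m a = a.
Proof.
move=> m_market.
by rewrite profit_binary // /seller lexx (ltW a_lt_b) -mulrDr subrK mulr1.
Qed.

Lemma profit_high m : profit w m b = b * share m.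
Proof. by rewrite /profit sum_ord2 /seller (leNgt b a) a_lt_b lexx mul0r add0r. Qed.

Lemma profit_le_max m p : market m -> profit w m p <= Num.max a (b * share m).
Proof.
move=> m_market; have /andP[share_ge0 _] := market_share_bounds m_market.
rewrite profit_binary // /seller le_max.
have [p_le_a | a_lt_p] := lerP p a.
  by rewrite (le_trans p_le_a (ltW a_lt_b)) -mulrDr subrK mulr1 p_le_a.
rewrite mul0r add0r; apply/orP; right.
have [p_le_b | b_lt_p] := lerP p b; first by rewrite ler_wpM2r.
by rewrite mul0r mulr_ge0 // ltW // (lt_trans a_gt0).
Qed.

Lemma opt_price_low m : market m -> b * share m <= a -> opt_price w m a.
Proof.
move=> m_market high_le_low p; rewrite profit_low //.
by apply: le_trans (profit_le_max p m_market) _; rewrite ge_max lexx high_le_low.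
Qed.

Lemma opt_price_high m : market m -> a <= b * share m -> opt_price w m b.
Proof.
move=> m_market low_le_high p; rewrite profit_high.
by apply: le_trans (profit_le_max p m_market) _; rewrite ge_max lexx low_le_high.
Qed.

Lemma unif_profit_binary mu : market mu -> unif_profit w mu = Num.max a (b * share mu).
Proof.
move=> mu_market; have bounded : has_ubound (range (profit w mu)).
  by exists (Num.max a (b * share mu)) => _ [p _ <-]; exact: profit_le_max.
apply/le_anti/andP; split.
  apply: ge_sup => [|_ [p _ <-]]; last exact: profit_le_max.
  by exists (profit w mu a), a.
rewrite /unif_profit ge_max -{1}(profit_low mu_market) -(profit_high mu).
by apply/andP; split; apply: (ub_le_sup bounded); eexists.
Qed.

Lemma eff_surplus_binary mu : market mu ->
  eff_surplus w mu = a * (1 - share mu) + b * share mu.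
Proof.
by move=> mu_market; rewrite /eff_surplus sum_ord2 (market_low_share mu_market).
Qed.

Lemma csurplus_low m : csurplus w m a = (b - a) * share m.
Proof. by rewrite /csurplus sum_ord2 /buyer lexx (ltW a_lt_b) subrr mul0r add0r. Qed.

Lemma csurplus_high m : csurplus w m b = 0.
Proof.
by rewrite /csurplus sum_ord2 /buyer (leNgt b a) a_lt_b lexx subrr !mul0r addr0.
Qed.

Definition penalized_value k q1 q2 : R -> R :=
  parabola a 0 k q1 \max parabola 0 b k q2.

Lemma penalized_value_ge k q1 q2 z :
  0 <= k -> Num.max a (b * z) <= penalized_value k q1 q2 z.
Proof.
move=> k_ge0; have pen_ge0 r : 0 <= k * (z - r) ^+ 2 by rewrite mulr_ge0 ?sqr_ge0.
rewrite /penalized_value /parabola /= ge_max !le_max mul0r addr0 add0r.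
by rewrite !lerDl !pen_ge0 orbT.
Qed.

Lemma penalized_value_low k q1 q2 :
  k * (q2 - q1) ^+ 2 <= a - b * q1 -> penalized_value k q1 q2 q1 = a.
Proof.
move=> k_small; rewrite /penalized_value /parabola /= subrr expr0n mulr0 mul0r !addr0.
by rewrite max_l // -opprB sqrrN; lra.
Qed.

Lemma penalized_value_high k q1 q2 :
  k * (q2 - q1) ^+ 2 <= b * q2 - a -> penalized_value k q1 q2 q2 = b * q2.
Proof.
move=> k_small; rewrite /penalized_value /parabola /= subrr expr0n mulr0 !addr0 add0r.
by rewrite max_r //; lra.
Qed.

Lemma strictly_convex_penalized_value k q1 q2 :
  0 < k -> strictly_convex (penalized_value k q1 q2).
Proof.
by move=> k_gt0; apply: strictly_convex_max; exact: strictly_convex_parabola.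
Qed.

Lemma continuous_penalized_value k q1 q2 : continuous (penalized_value k q1 q2).
Proof. by move=> z; apply: continuous_max; exact: continuous_parabola. Qed.

Lemma rationalizable_two_segments mu t q1 q2 :
  market mu -> 0 < t < 1 -> 0 <= q1 -> q2 <= 1 -> b * q1 < a < b * q2 ->
  t * q1 + (1 - t) * q2 = share mu ->
  rationalizable w mu (t * ((b - a) * q1)) (t * a + (1 - t) * (b * q2)).
Proof.
move=> mu_market t01 q1_ge0 q2_le1 /andP[low_q1 high_q2] mean.
have q1_lt_q2 : q1 < q2.
  by rewrite -(ltr_pM2l (lt_trans a_gt0 a_lt_b)) (lt_trans low_q1 high_q2).
have q1_market := market_binary q1_ge0 (ltW (lt_le_trans q1_lt_q2 q2_le1)).
have q2_market := market_binary (le_trans q1_ge0 (ltW q1_lt_q2)) q2_le1.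
have gap_gt0 : 0 < (q2 - q1) ^+ 2 by rewrite exprn_even_gt0 //= subr_eq0 gt_eqF.
pose k := Num.min (a - b * q1) (b * q2 - a) / (q2 - q1) ^+ 2.
have k_gt0 : 0 < k by rewrite divr_gt0 // lt_min !subr_gt0 low_q1 high_q2.
have k_gap : k * (q2 - q1) ^+ 2 = Num.min (a - b * q1) (b * q2 - a).
  by rewrite divfK // gt_eqF.
pose c m := penalized_value k q1 q2 (share m).
exists [:: (t, binary_market q1, a); (1 - t, binary_market q2, b)], c; split.
- apply: strictly_convex_cont_share; first exact: continuous_penalized_value.
  exact: strictly_convex_penalized_value.
- apply: two_point_segmentation => //.
    by apply/eqP => /(congr1 share); rewrite !share_binary => /eqP; rewrite lt_eqF.
  by rewrite binary_market_mean mean -marketE.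
- move=> x; rewrite !inE => /orP[] /eqP -> /=.
    by apply: opt_price_low; rewrite // share_binary ltW.
  by apply: opt_price_high; rewrite // share_binary ltW.
- apply: optimal_seg_tight_bound => [m m_market p | x].
    exact: le_trans (profit_le_max p m_market) (penalized_value_ge _ _ _ (ltW k_gt0)).
  rewrite !inE => /orP[] /eqP -> /=; rewrite /c share_binary.
    by rewrite profit_low // penalized_value_low // k_gap ge_min lexx.
  by rewrite profit_high share_binary penalized_value_high // k_gap ge_min lexx orbT.
- rewrite /CS /PS !big_cons !big_nil /sw /sm /sp /=.
  rewrite csurplus_low csurplus_high profit_low // profit_high !share_binary.
  by rewrite mulr0 !addr0.
Qed.

End TwoTypes.

Lemma two_segment_solution (R : realType) (a b m cs ps : R) :
  0 < a -> a < b -> 0 < cs -> Num.max a (b * m) < ps ->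
  cs + ps < a * (1 - m) + b * m ->
  exists t q1 q2, [/\ 0 < t < 1, 0 <= q1, q2 <= 1 & b * q1 < a < b * q2] /\
    [/\ t * q1 + (1 - t) * q2 = m, cs = t * ((b - a) * q1)
       & ps = t * a + (1 - t) * (b * q2)].
Proof.
move=> a_gt0 a_lt_b cs_gt0; rewrite gt_max => /andP[a_lt_ps bm_lt_ps] total_lt.
have ba_gt0 : 0 < b - a by rewrite subr_gt0.
(* [x = t q1] is read off from [cs], then [t] from [ps]. *)
pose x := cs / (b - a).
have x_gt0 : 0 < x by rewrite divr_gt0.
have cs_x : cs = (b - a) * x by rewrite mulrC divfK // gt_eqF.
pose t := (b * x + ps - b * m) / a.
have t_a : t * a = b * x + ps - b * m by rewrite divfK // gt_eqF.
have t_gt0 : 0 < t.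
  by rewrite divr_gt0 // -addrA addr_gt0 ?subr_gt0 // mulr_gt0 // (lt_trans a_gt0).
have mx_gt0 : 0 < m - x.
  by rewrite -(pmulr_rgt0 _ ba_gt0); nra.
have t_lt1 : t < 1 by rewrite -(ltr_pM2r a_gt0) mul1r t_a; nra.
have t'_gt0 : 0 < 1 - t by rewrite subr_gt0.
pose q1 := x / t; pose q2 := (m - x) / (1 - t).
have q1_t : q1 * t = x by rewrite divfK // gt_eqF.
have q2_t : q2 * (1 - t) = m - x by rewrite divfK // gt_eqF.
exists t, q1, q2; split; split.
- by rewrite t_gt0 t_lt1.
- by rewrite divr_ge0 // ltW.
- by rewrite ler_pdivrMr // mul1r; nra.
- apply/andP; split.
    by rewrite -(ltr_pM2r t_gt0) -mulrA q1_t; nra.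
  by rewrite -(ltr_pM2r t'_gt0) -mulrA q2_t; nra.
- by rewrite mulrC q1_t mulrC q2_t addrC subrK.
- by rewrite cs_x -q1_t; ring.
- by have /= b_q2_t := congr1 ( *%R b) q2_t; lra.
Qed.

Theorem proposition5 (R : realType) (w mu : 'rV[R]_2) :
  0 < w ord0 ord0 -> w ord0 ord0 < w ord0 ord_max ->
  market mu ->
  forall cs ps : R, in_interior_triangle w mu cs ps ->
    rationalizable w mu cs ps.
Proof.
move=> a_gt0 a_lt_b mu_market cs ps [cs_gt0 ps_gt total_lt].
rewrite unif_profit_binary // in ps_gt; rewrite eff_surplus_binary // in total_lt.
have [t [q1 [q2 [[t01 q1_ge0 q2_le1 prices] [mean -> ->]]]]] :=
  two_segment_solution a_gt0 a_lt_b cs_gt0 ps_gt total_lt.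
exact: rationalizable_two_segments.
Qed.
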